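(* Let $G=(V,E)$ be a finite, connected, undirected graph with $n\ge 2$ vertices. Then for every $r\ge 1$, the fixation probability satisfies $f_{G,r}\ge \frac{1}{n}$.
   Context: The Moran process on $G$ with mutant fitness $r>0$ is the Markov chain $(X_i)_{i\ge0}$ whose state $X_i\subseteq V$ is the set of vertices occupied by mutants; every other vertex is occupied by a non-mutant of fitness $1$. Write $W(S)=r|S|+|V\setminus S|$ for the total fitness. Given $X_i=S$, one step is: choose a vertex $x$ with probability $r/W(S)$ if $x\in S$ and $1/W(S)$ if $x\notin S$; then choose a neighbour $y$ of $x$ uniformly at random; set $X_{i+1}=S\cup\{y\}$ if $x\in S$ and $X_{i+1}=S\setminus\{y\}$ if $x\notin S$. Fixation means $X_i=V$ for some $i$. For $x\in V$, $f_{G,r}(x)$ is the probability of fixation when $X_0=\{x\}$, and $f_{G,r}=\frac1n\sum_{x\in V}f_{G,r}(x)$ is the fixation probability when the initial single mutant is placed at a uniformly random vertex. *)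

From mathcomp Require Import all_boot.
From Stdlib Require Import Reals ClassicalEpsilon.
Set Implicit Arguments. Unset Strict Implicit. Unset Printing Implicit Defensive.

Section Moran.
Variables (T : finType) (e : rel T) (r : R).

Definition deg (x : T) : nat := #|[set y | e x y]|.

Definition fitness (S : {set T}) : R :=
  (r * INR #|S| + INR #|~: S|)%R.

(* state after reproducer x places offspring on neighbour y *)
Definition moran_next (S : {set T}) (x y : T) : {set T} :=
  if x \in S then y |: S else S :\ y.

Definition moran_trans (S S' : {set T}) : R :=
  \big[Rplus/0%R]_(x : T)
    \big[Rplus/0%R]_(y : T | e x y)
      ((if x \in S then r else 1%R) / fitness S / INR (deg x)
        * (if S' == moran_next S x y then 1%R else 0%R))%R.

Fixpoint moran_dist (x0 : T) (t : nat) (S' : {set T}) : R :=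
  match t with
  | 0 => if S' == [set x0] then 1%R else 0%R
  | t.+1 => \big[Rplus/0%R]_(S : {set T}) (moran_dist x0 t S * moran_trans S S')%R
  end.

(* f_{G,r}(x): probability that X_i = V for some i.  Since V is absorbing,
   the events {X_t = V} increase in t, so this is sup_t P(X_t = V). *)
Definition fixprob_at (x : T) : R :=
  epsilon (inhabits 0%R)
    (fun l => is_lub (fun p => exists t, p = moran_dist x t [set: T]) l).

Definition fixprob : R :=
  (/ INR #|T| * \big[Rplus/0%R]_(x : T) fixprob_at x)%R.

End Moran.

(* Put
   Phi(S) = sum_{z in S} 1/deg z.  For r >= 1, Phi(X_t) is a submartingale:
   each edge {x,y} with x a mutant and y not contributes the pair of moves
   "x invades y" and "y invades x", whose expected Phi-changes are
   r/(W deg x deg y) and -1/(W deg x deg y), summing to something >= 0.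
   Hence E[Phi(X_t)] >= Phi({x0}) = 1/deg x0 for every t.  On the other hand
   Phi(X_t)^2 is bounded by Phi(V)^2 and grows by at least n^-4 in expectation
   each step while the chain is not absorbed, so P(X_t transient) -> 0 and
   E[Phi(X_t)] <= Phi(V) (P(X_t = V) + P(X_t transient)).  Letting t grow
   gives f(x0) >= (1/deg x0) / Phi(V), and averaging over x0 gives
   f >= (1/n) sum_x (1/deg x)/Phi(V) = 1/n. *)
From mathcomp Require Import all_boot.
From Stdlib Require Import Reals Lra ClassicalEpsilon.
From HB Require Import structures.
Open Scope R_scope.

(* Real addition is a commutative monoid law, enabling the generic bigop
   lemmas (exchange_big, bigD1, big_split, ...) for sums of reals. *)
HB.instance Definition _ := Monoid.isComLaw.Build R 0%R Rplus
  (fun a b c => esym (Rplus_assoc a b c)) Rplus_comm Rplus_0_l.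

Section RealSums.
Context {I : finType}.

Lemma sumR_le (P : pred I) (F G : I -> R) :
  (forall i, P i -> F i <= G i) ->
  \big[Rplus/0]_(i | P i) F i <= \big[Rplus/0]_(i | P i) G i.
Proof.
move=> FG; apply: (big_rec2 (fun a b => a <= b)); first lra.
by move=> i a b Pi ab; have := FG i Pi; lra.
Qed.

Lemma sumR_ge0 (P : pred I) (F : I -> R) :
  (forall i, P i -> 0 <= F i) -> 0 <= \big[Rplus/0]_(i | P i) F i.
Proof.
move=> F_ge0; apply: (big_rec (fun a => 0 <= a)); first lra.
by move=> i a Pi a_ge0; have := F_ge0 i Pi; lra.
Qed.

Lemma sumR_scale (P : pred I) (F : I -> R) c :
  \big[Rplus/0]_(i | P i) (c * F i) = c * \big[Rplus/0]_(i | P i) F i.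
Proof.
apply: (big_rec2 (fun a b => a = c * b)); first lra.
by move=> i a b _ ->; lra.
Qed.

Lemma sumR_scaler (P : pred I) (F : I -> R) c :
  \big[Rplus/0]_(i | P i) (F i * c) = \big[Rplus/0]_(i | P i) F i * c.
Proof. by rewrite Rmult_comm -sumR_scale; apply: eq_bigr => i _; lra. Qed.

(* [big_split] stated with the concrete operation [Rplus], so that the
   resulting terms stay recognizable by [ring]. *)
Lemma sumR_add (P : pred I) (F G : I -> R) :
  \big[Rplus/0]_(i | P i) (F i + G i) =
  \big[Rplus/0]_(i | P i) F i + \big[Rplus/0]_(i | P i) G i.
Proof. exact: big_split. Qed.

Lemma sumR_term_le (P : pred I) (F : I -> R) j :
  P j -> (forall i, P i -> 0 <= F i) -> F j <= \big[Rplus/0]_(i | P i) F i.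
Proof.
move=> Pj F_ge0; rewrite (bigD1 j) //=.
have : 0 <= \big[Rplus/0]_(i | P i && (i != j)) F i.
  by apply: sumR_ge0 => i /andP [Pi _]; apply: F_ge0.
lra.
Qed.

Lemma sumR_dirac (j : I) (F : I -> R) :
  \big[Rplus/0]_i ((if i == j then 1 else 0) * F i) = F j.
Proof.
rewrite (bigD1 j) //= eqxx big1 ?Rplus_0_r ?Rmult_1_l //.
by move=> i /negbTE ->; rewrite Rmult_0_l.
Qed.

Lemma sumR_const (P : pred I) c :
  \big[Rplus/0]_(i | P i) c = INR #|[set i | P i]| * c.
Proof.
rewrite -(sum1dep_card P) (big_morph INR (id1 := 0) (op1 := Rplus)) //.
  by rewrite -sumR_scaler; apply: eq_bigr => i _ /=; lra.
by move=> a b; rewrite plus_INR.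
Qed.

Lemma sumR_pairs_ge0 (F : I -> I -> R) :
  (forall x y, 0 <= F x y + F y x) ->
  0 <= \big[Rplus/0]_x \big[Rplus/0]_y F x y.
Proof.
move=> pair_ge0.
have : 0 <= \big[Rplus/0]_x \big[Rplus/0]_y (F x y + F y x).
  by apply: sumR_ge0 => x _; apply: sumR_ge0 => y _.
have swap : \big[Rplus/0]_x \big[Rplus/0]_y F y x =
            \big[Rplus/0]_x \big[Rplus/0]_y F x y by rewrite exchange_big.
under eq_bigr => x _ do rewrite big_split.
by rewrite big_split /= swap; lra.
Qed.

End RealSums.

Section Moran.
Variables (T : finType) (e : rel T) (r : R).
Hypothesis e_sym : symmetric e.
Hypothesis e_conn : forall x y : T, connect e x y.
Hypothesis n_ge2 : (2 <= #|T|)%nat.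
Hypothesis r_ge1 : 1 <= r.

Lemma boundary_edge {S : {set T}} : S != set0 -> S != setT ->
  exists x y, [/\ x \in S, y \notin S & e x y].
Proof.
move=> /set0Pn [x xS] S_nT.
have [y yS] : exists y, y \notin S.
  apply: NNPP => all_in; move/eqP: S_nT; apply; apply/setP => z; rewrite inE.
  by apply/negPn/negP => zS; apply: all_in; exists z.
apply: NNPP => no_edge.
have S_closed : closed e S.
  move=> a b eab; apply/idP/idP => Sa; apply/negPn/negP => Sb; apply: no_edge.
  - by exists a, b.
  - by exists b, a; rewrite e_sym.
by move: (closed_connect S_closed (e_conn x y)); rewrite xS (negbTE yS).
Qed.

(* Since n >= 2 and the graph is connected, no vertex is isolated. *)
Lemma degR_pos x : 0 < INR (deg e x).
Proof.
have x_ne0 : [set x] != set0 by apply/set0Pn; exists x; rewrite inE.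
have x_nT : [set x] != setT.
  by apply/eqP => xT; move: n_ge2; rewrite -cardsT -xT cards1.
have [a [b [ax _ eab]]] := boundary_edge x_ne0 x_nT.
move: ax eab; rewrite inE => /eqP -> exb.
by apply: lt_0_INR; apply/ltP/card_gt0P; exists b; rewrite inE.
Qed.

Lemma degR_le x : INR (deg e x) <= INR #|T|.
Proof. by apply: le_INR; apply/leP; apply: max_card. Qed.

Lemma inv_degR_pos z : 0 < / INR (deg e z).
Proof. exact/Rinv_0_lt_compat/degR_pos. Qed.

Lemma nR_pos : 0 < INR #|T|.
Proof. by apply: lt_0_INR; apply/ltP; apply: leq_trans n_ge2. Qed.

Lemma fitness_bounds (S : {set T}) : INR #|T| <= fitness r S <= r * INR #|T|.
Proof.
rewrite /fitness -(cardsC S) plus_INR.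
have := pos_INR #|S|; have := pos_INR #|~: S|; nra.
Qed.

Lemma fitness_pos (S : {set T}) : 0 < fitness r S.
Proof. by have := fitness_bounds S; have := nR_pos; lra. Qed.

(* Probability that the reproducer is x and the offspring goes to a given
   neighbour of x, in state S. *)
Definition step_rate (S : {set T}) x : R :=
  (if x \in S then r else 1) / fitness r S / INR (deg e x).

Definition step_mean (S : {set T}) (h : {set T} -> R) : R :=
  \big[Rplus/0]_x \big[Rplus/0]_(y | e x y) (step_rate S x * h (moran_next S x y)).

Lemma step_rate_pos S x : 0 < step_rate S x.
Proof.
have := fitness_pos S; have := degR_pos x.
by rewrite /step_rate; case: (x \in S) => dx_pos W_pos;
  repeat apply: Rdiv_lt_0_compat => //; lra.
Qed.

Lemma trans_step_mean S h :
  \big[Rplus/0]_S' (moran_trans e r S S' * h S') = step_mean S h.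
Proof.
rewrite /moran_trans /step_mean.
under eq_bigr => S' _ do rewrite -sumR_scaler.
rewrite exchange_big; apply: eq_bigr => x _.
under eq_bigr => S' _ do rewrite -sumR_scaler.
rewrite exchange_big; apply: eq_bigr => y _.
rewrite -(sumR_dirac (moran_next S x y) (fun S' => step_rate S x * h S')).
apply: eq_bigr => S' _; rewrite /step_rate.
set rate := _ / _ / _; set hit := if _ then _ else _; set value := h S'; ring.
Qed.

(* The kernel is stochastic: total fitness W(S) is exactly the sum of the
   reproduction weights. *)
Lemma step_mean1 (S : {set T}) : step_mean S (fun=> 1) = 1.
Proof.
have W_pos := fitness_pos S; rewrite /step_mean.
transitivity (\big[Rplus/0]_x ((if x \in S then r else 1) * / fitness r S)).
  apply: eq_bigr => x _.
  rewrite (eq_bigr (fun=> step_rate S x)); last by move=> y _; rewrite Rmult_1_r.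
  by rewrite sumR_const /step_rate; have := degR_pos x; rewrite /deg => dx_pos; field; lra.
rewrite sumR_scaler (bigID (fun x => x \in S)) /=.
rewrite (eq_bigr (fun=> r)); last by move=> x ->.
rewrite [X in _ + X](eq_bigr (fun=> 1)); last by move=> x /negbTE ->.
rewrite !sumR_const.
have -> : [set x | x \in S] = S by apply/setP => z; rewrite inE.
have -> : [set x | x \notin S] = ~: S by apply/setP => z; rewrite !inE.
by move: W_pos; rewrite /fitness => W_pos; field; lra.
Qed.

Lemma step_mean_drift (S : {set T}) h : step_mean S h = h S +
  \big[Rplus/0]_x \big[Rplus/0]_(y | e x y)
    (step_rate S x * (h (moran_next S x y) - h S)).
Proof.
rewrite -{1}[h S]Rmult_1_r -(step_mean1 S) /step_mean -sumR_scale -sumR_add.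
apply: eq_bigr => x _; rewrite -sumR_scale -sumR_add.
by apply: eq_bigr => y _ /=; ring.
Qed.

Definition phi (S : {set T}) : R := \big[Rplus/0]_(z in S) / INR (deg e z).

Lemma phi_ge0 (S : {set T}) : 0 <= phi S.
Proof. by apply: sumR_ge0 => z _; apply/Rlt_le/inv_degR_pos. Qed.

Lemma phi_le_phiT (S : {set T}) : phi S <= phi setT.
Proof.
rewrite /phi (big_mkcond (fun z => z \in S)) (big_mkcond (fun z => z \in setT)).
apply: sumR_le => z _; rewrite in_setT; case: (z \in S); first lra.
exact/Rlt_le/inv_degR_pos.
Qed.

Lemma phiT_pos : 0 < phi setT.
Proof.
have [x0 _] : exists x : T, x \in T by apply/card_gt0P; apply: leq_trans n_ge2.
apply: (Rlt_le_trans _ (phi [set x0])); last exact: phi_le_phiT.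
by rewrite /phi big_set1; apply: inv_degR_pos.
Qed.

Lemma phi_add y (S : {set T}) : y \notin S -> phi (y |: S) = / INR (deg e y) + phi S.
Proof. by move=> yS; rewrite /phi big_setU1. Qed.

Lemma phi_del y (S : {set T}) : y \in S -> phi (S :\ y) = phi S - / INR (deg e y).
Proof. by move=> yS; rewrite -{2}(setD1K yS) phi_add ?setD11 //; lra. Qed.

Lemma phi_increment (S : {set T}) x y : phi (moran_next S x y) - phi S =
  if x \in S then (if y \in S then 0 else / INR (deg e y))
  else (if y \in S then - / INR (deg e y) else 0).
Proof.
rewrite /moran_next; case: (x \in S); case yS: (y \in S).
- by rewrite (setUidPr _) ?sub1set //; lra.
- by rewrite phi_add ?yS //; lra.
- by rewrite phi_del //; lra.
- have -> : S :\ y = S.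
    by apply/setP => z; rewrite !inE; case: eqP => // ->; rewrite yS.
  lra.
Qed.

Definition phi_drift (S : {set T}) : R :=
  \big[Rplus/0]_x \big[Rplus/0]_(y | e x y)
    (step_rate S x * (phi (moran_next S x y) - phi S)).

(* Along an edge from a mutant x to a non-mutant y the two opposite moves
   have expected Phi-changes (r - 1)/(W deg x deg y) >= 0 in total. *)
Lemma edge_drift_ge0 (S : {set T}) x y : x \in S -> y \notin S ->
  0 <= step_rate S x * / INR (deg e y) + step_rate S y * - / INR (deg e x).
Proof.
move=> xS /negbTE yS; rewrite /step_rate xS yS.
have W_pos := fitness_pos S; have dx_pos := degR_pos x; have dy_pos := degR_pos y.
replace (_ + _) with ((r - 1) * (/ fitness r S * / INR (deg e x) * / INR (deg e y)))
  by (field; lra).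
apply: Rmult_le_pos; first lra.
by apply: Rlt_le; repeat apply: Rmult_lt_0_compat; apply: Rinv_0_lt_compat.
Qed.

Lemma phi_drift_ge0 (S : {set T}) : 0 <= phi_drift S.
Proof.
rewrite /phi_drift; under eq_bigr => x _ do rewrite big_mkcond.
apply: sumR_pairs_ge0 => x y /=; rewrite (e_sym y x); case: (e x y); last lra.
rewrite !phi_increment; case xS: (x \in S); case yS: (y \in S).
- lra.
- by apply: edge_drift_ge0; rewrite ?yS.
- by rewrite Rplus_comm; apply: edge_drift_ge0; rewrite ?xS.
- lra.
Qed.

Definition transient (S : {set T}) : R :=
  if (S != set0) && (S != setT) then 1 else 0.

(* A mutant reproduction along a given edge has probability >= n^-2 and moves
   Phi by 1/deg y >= 1/n, so it contributes >= n^-4 to E[(Delta Phi)^2]. *)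
Lemma move_variance_lb (S : {set T}) x y :
  / INR #|T| ^ 4 <= r / fitness r S / INR (deg e x) * (/ INR (deg e y)) ^ 2.
Proof.
have W_pos := fitness_pos S; have [_ W_le] := fitness_bounds S.
have n_pos := nR_pos; have dx_pos := degR_pos x; have dy_pos := degR_pos y.
have dx_le := degR_le x; have dy_le := degR_le y.
have inv_n_pos : 0 < / INR #|T| by apply: Rinv_0_lt_compat.
have inv_n_le_rate : / INR #|T| <= r / fitness r S.
  have : / (r * INR #|T|) <= / fitness r S by apply: Rinv_le_contravar.
  replace (/ INR #|T|) with (r * / (r * INR #|T|)) by (field; lra).
  by move=> ?; apply: Rmult_le_compat_l; lra.
have inv_n_le_dx : / INR #|T| <= / INR (deg e x) by apply: Rinv_le_contravar.
have inv_n_le_dy : / INR #|T| <= / INR (deg e y) by apply: Rinv_le_contravar.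
replace (/ INR #|T| ^ 4) with ((/ INR #|T| * / INR #|T|) * (/ INR #|T|) ^ 2)
  by (field; lra).
apply: Rmult_le_compat.
- by apply: Rmult_le_pos; lra.
- by apply: pow_le; lra.
- by apply: Rmult_le_compat; lra.
- by apply: pow_incr; lra.
Qed.

(* Phi^2 grows in one step by at least n^-4 in expectation from a transient
   state: the submartingale part 2 Phi drift is >= 0 and the quadratic part
   contains a boundary move of size >= n^-4. *)
Lemma phi_sq_step (S : {set T}) :
  phi S ^ 2 + / INR #|T| ^ 4 * transient S <= step_mean S (fun S => phi S ^ 2).
Proof.
rewrite step_mean_drift.
set sq_incr := fun x y => step_rate S x * (phi (moran_next S x y) - phi S) ^ 2.
have -> : \big[Rplus/0]_x \big[Rplus/0]_(y | e x y)
      (step_rate S x * (phi (moran_next S x y) ^ 2 - phi S ^ 2)) =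
    \big[Rplus/0]_x \big[Rplus/0]_(y | e x y) sq_incr x y + 2 * phi S * phi_drift S.
  rewrite /phi_drift -sumR_scale -sumR_add; apply: eq_bigr => x _.
  by rewrite -sumR_scale -sumR_add; apply: eq_bigr => y _; rewrite /sq_incr /=; ring.
have sq_incr_ge0 x y : 0 <= sq_incr x y.
  by apply: Rmult_le_pos; [apply/Rlt_le/step_rate_pos | apply: pow2_ge_0].
have cross_ge0 : 0 <= 2 * phi S * phi_drift S.
  by have := phi_drift_ge0 S; have := phi_ge0 S; nra.
suff : / INR #|T| ^ 4 * transient S <=
  \big[Rplus/0]_x \big[Rplus/0]_(y | e x y) sq_incr x y by lra.
rewrite /transient; case: ifP => [/andP [S_ne0 S_nT] | _]; last first.
  by rewrite Rmult_0_r; do 2 (apply: sumR_ge0 => ? _).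
have [x [y [xS yS exy]]] := boundary_edge S_ne0 S_nT.
apply: (Rle_trans _ (\big[Rplus/0]_(y | e x y) sq_incr x y)).
  apply: (Rle_trans _ (sq_incr x y)); last by apply: sumR_term_le.
  rewrite Rmult_1_r /sq_incr phi_increment xS (negbTE yS) /step_rate xS.
  exact: move_variance_lb.
apply: (sumR_term_le _ (fun x => \big[Rplus/0]_(y | e x y) sq_incr x y) x) => // ? _.
exact: sumR_ge0.
Qed.

Section FromVertex.
Variable x0 : T.

Definition expect t (h : {set T} -> R) : R :=
  \big[Rplus/0]_S (moran_dist e r x0 t S * h S).

Lemma moran_trans_ge0 S S' : 0 <= moran_trans e r S S'.
Proof.
apply: sumR_ge0 => x _; apply: sumR_ge0 => y _; apply: Rmult_le_pos.
  exact/Rlt_le/step_rate_pos.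
by case: (_ == _); lra.
Qed.

Lemma moran_dist_ge0 t S : 0 <= moran_dist e r x0 t S.
Proof.
elim: t S => [|t IH] S /=; first by case: (_ == _); lra.
by apply: sumR_ge0 => S0 _; apply: Rmult_le_pos => //; apply: moran_trans_ge0.
Qed.

Lemma expect_step t h :
  expect t.+1 h = \big[Rplus/0]_S (moran_dist e r x0 t S * step_mean S h).
Proof.
rewrite /expect; under eq_bigr => S' _ do rewrite /= -sumR_scaler.
rewrite exchange_big; apply: eq_bigr => S _.
by rewrite -trans_step_mean -sumR_scale; apply: eq_bigr => S' _; ring.
Qed.

Lemma expect_le t h g : (forall S, h S <= g S) -> expect t h <= expect t g.
Proof.
move=> hg; apply: sumR_le => S _.
by apply: Rmult_le_compat_l; [apply: moran_dist_ge0 | apply: hg].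
Qed.

Lemma expect_one t : expect t (fun=> 1) = 1.
Proof.
elim: t => [|t IH]; first exact: (sumR_dirac [set x0] (fun=> 1)).
by rewrite expect_step -[RHS]IH; apply: eq_bigr => S _; rewrite step_mean1.
Qed.

Lemma expect_const t k : expect t (fun=> k) = k.
Proof.
rewrite -[RHS]Rmult_1_l -(expect_one t) /expect -sumR_scaler.
by apply: eq_bigr => S _; ring.
Qed.

Lemma fixation_le1 t : moran_dist e r x0 t setT <= 1.
Proof.
rewrite -(expect_one t) /expect -(sumR_dirac setT (moran_dist e r x0 t)).
by apply: sumR_le => S _; have := moran_dist_ge0 t S; case: (S == setT); lra.
Qed.

Lemma expect_phi_lb t : / INR (deg e x0) <= expect t phi.
Proof.
elim: t => [|t IH]; first by rewrite /expect /= sumR_dirac /phi big_set1; lra.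
rewrite expect_step; apply: (Rle_trans _ _ _ IH).
apply: sumR_le => S _; apply: Rmult_le_compat_l; first exact: moran_dist_ge0.
by rewrite step_mean_drift; have := phi_drift_ge0 S; rewrite /phi_drift; lra.
Qed.

Lemma expect_phi_sq_step t :
  expect t (fun S => phi S ^ 2) + / INR #|T| ^ 4 * expect t transient
    <= expect t.+1 (fun S => phi S ^ 2).
Proof.
rewrite expect_step /expect -sumR_scale -sumR_add; apply: sumR_le => S _.
apply: (Rle_trans _ (moran_dist e r x0 t S * (phi S ^ 2 + / INR #|T| ^ 4 * transient S))).
  by right; ring.
by apply: Rmult_le_compat_l; [apply: moran_dist_ge0 | apply: phi_sq_step].
Qed.

(* Absorption: the transient mass falls below any K > 0, since otherwise
   E[Phi(X_t)^2] would grow linearly past its bound Phi(V)^2. *)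
Lemma transient_mass_small K : 0 < K -> exists t, expect t transient <= K.
Proof.
move=> K_pos; apply: NNPP => never_small.
have big_mass t : K < expect t transient.
  by apply: Rnot_le_lt => small; apply: never_small; exists t.
have c_pos : 0 < / INR #|T| ^ 4 by apply/Rinv_0_lt_compat/pow_lt/nR_pos.
have linear_growth N : INR N * (/ INR #|T| ^ 4 * K) <= expect N (fun S => phi S ^ 2).
  elim: N => [|N IH].
    rewrite /= Rmult_0_l; apply: sumR_ge0 => S _.
    by apply: Rmult_le_pos; [apply: moran_dist_ge0 | apply: pow2_ge_0].
  have := expect_phi_sq_step N; have := big_mass N; rewrite S_INR; nra.
have bounded N : expect N (fun S => phi S ^ 2) <= phi setT ^ 2.
  rewrite -[X in _ <= X](expect_const N (phi setT ^ 2)); apply: expect_le => S.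
  by apply: pow_incr; split; [apply: phi_ge0 | apply: phi_le_phiT].
have [N N_large] := INR_archimed (/ INR #|T| ^ 4 * K) (phi setT ^ 2)
  ltac:(apply: Rmult_lt_0_compat; lra).
by have := linear_growth N; have := bounded N; lra.
Qed.

(* Phi vanishes on the empty set and is at most Phi(V) elsewhere. *)
Lemma expect_phi_ub t :
  expect t phi <= phi setT * (moran_dist e r x0 t setT + expect t transient).
Proof.
have phiT_gt0 := phiT_pos.
apply: (Rle_trans _ (expect t (fun S =>
  phi setT * ((if S == setT then 1 else 0) + transient S)))).
  apply: expect_le => S; case: eqP => [-> | S_nT].
    by rewrite /transient eqxx andbF; lra.
  case: (S =P set0) => [-> | S_ne0].
    by rewrite /phi big_set0 /transient eqxx /=; lra.
  rewrite /transient (introT andP (conj (introN eqP S_ne0) (introN eqP S_nT))).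
  by have := phi_le_phiT S; lra.
right; rewrite /expect -(sumR_dirac setT (moran_dist e r x0 t)) -sumR_add -sumR_scale.
apply: eq_bigr => S _; set at_V := if _ then _ else _; set p := moran_dist _ _ _ _ _.
ring.
Qed.

Lemma fixation_le_fixprob t : moran_dist e r x0 t setT <= fixprob_at e r x0.
Proof.
set fix_probs := fun p => exists t, p = moran_dist e r x0 t setT.
have bounded : bound fix_probs by exists 1 => q [t' ->]; apply: fixation_le1.
have nonempty : exists q, fix_probs q by exists (moran_dist e r x0 0 setT), 0%nat.
have [lub lub_spec] := completeness _ bounded nonempty.
have [lub_ub _] : is_lub fix_probs (fixprob_at e r x0).
  by apply: (epsilon_spec (inhabits 0) (is_lub fix_probs)); exists lub.
by apply: lub_ub; exists t.
Qed.

Lemma fixprob_at_lb : / INR (deg e x0) / phi setT <= fixprob_at e r x0.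
Proof.
have phiT_gt0 := phiT_pos.
set b := _ / phi setT; set f := fixprob_at e r x0.
have b_eq : / INR (deg e x0) = phi setT * b.
  by rewrite /b; have := degR_pos x0 => dx_pos; field; lra.
have [//|f_lt] := Rle_or_lt b f.
have [t small] := transient_mass_small ((b - f) / 2) ltac:(lra).
have := expect_phi_lb t; have := expect_phi_ub t; have := fixation_le_fixprob t.
rewrite b_eq -/f => fix_le ub lb.
have : phi setT * b <= phi setT * (f + (b - f) / 2).
  by apply: (Rle_trans _ _ _ lb); apply: (Rle_trans _ _ _ ub);
    apply: Rmult_le_compat_l; lra.
by move/(Rmult_le_reg_l _ _ _ phiT_gt0); lra.
Qed.

End FromVertex.

Lemma sum_inv_deg_normalized :
  \big[Rplus/0]_x (/ INR (deg e x) / phi setT) = 1.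
Proof.
have phiT_gt0 := phiT_pos.
rewrite sumR_scaler (_ : \big[Rplus/0]_x _ = phi setT); first by field; lra.
by rewrite /phi; apply: eq_bigl => z; rewrite in_setT.
Qed.

End Moran.

Close Scope R_scope.

Theorem lemma1 (T : finType) (e : rel T)
  (e_sym : symmetric e) (e_irr : irreflexive e)
  (e_conn : forall x y : T, connect e x y)
  (n_ge2 : (2 <= #|T|)%N)
  (r : R) (r_ge1 : (1 <= r)%R) :
  (/ INR #|T| <= fixprob e r)%R.
Proof.
have inv_n_ge0 : (0 <= / INR #|T|)%R by apply/Rlt_le/Rinv_0_lt_compat/nR_pos.
rewrite /fixprob -[X in (X <= _)%R]Rmult_1_r -(sum_inv_deg_normalized _ _ e_sym e_conn n_ge2).
apply: Rmult_le_compat_l => //; apply: sumR_le => x _.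
exact: fixprob_at_lb.
Qed.
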